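(* Let $G=(V,E)$ be a graph with a partition $(V_1,V_2)$ of $V$ such that $G[V_1]$ and $G[V_2]$ are $P_5$-free. Let $C$ be a connected component of $G[V_2]$ and let $X=V(C)\cap N(V_1)$, where $N(V_1)$ is the set of vertices having a neighbour in $V_1$. Let $F\subseteq V_2$ be a set such that $G\setminus F$ is $P_5$-free and $|F\cap V(C)|\ge|X|$. Then $F'=(F\setminus V(C))\cup X$ satisfies that $G\setminus F'$ is $P_5$-free, and $|F'|\le|F|$.
   Context: Graphs are finite, simple and undirected. A $P_5$ is a path on $5$ vertices (as a not necessarily induced subgraph); a graph is $P_5$-free if it contains no $P_5$. $G[X]$ denotes the subgraph induced by $X$, and $G\setminus F=G[V\setminus F]$. *)

From mathcomp Require Import all_boot.
Set Implicit Arguments. Unset Strict Implicit. Unset Printing Implicit Defensive.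

Definition simple_graph (T : finType) (e : rel T) :=
  symmetric e /\ irreflexive e.

(* G[S] contains a P5 (not necessarily induced): five pairwise distinct
   vertices of S, v0 - v1 - v2 - v3 - v4 consecutive adjacent. *)
Definition has_P5_in (T : finType) (e : rel T) (S : {set T}) : Prop :=
  exists v : 'I_5 -> T,
    injective v /\ (forall i, v i \in S) /\
    (forall i : 'I_5, forall j : 'I_5, j = i.+1 :> nat -> e (v i) (v j)).

Definition P5_free_in (T : finType) (e : rel T) (S : {set T}) : Prop :=
  ~ has_P5_in e S.

Definition induced_rel (T : finType) (e : rel T) (S : {set T}) : rel T :=
  fun x y => [&& x \in S, y \in S & e x y].

Definition is_component (T : finType) (e : rel T) (S C : {set T}) : Prop :=
  exists2 x, x \in S &
    C = [set y in S | connect (induced_rel e S) x y].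

Definition nbhd (T : finType) (e : rel T) (A : {set T}) : {set T} :=
  [set v | [exists u in A, e v u]].

From mathcomp Require Import all_boot.

(* X separates C from the rest of G \ F': an edge leaving a vertex of C \ X
   stays in V2 (it cannot reach V1) and hence in the component C.  A P5 is
   connected, so a P5 of G \ F' lies either inside C, hence in G[V2], or
   outside C, where it avoids F' = (F \ C) u X and therefore all of F. *)

Set Implicit Arguments.
Unset Strict Implicit.
Unset Printing Implicit Defensive.

Lemma card_setDU_le (T : finType) (A B C : {set T}) :
  #|B| <= #|A :&: C| -> #|(A :\: C) :|: B| <= #|A|.
Proof.
move=> leB; rewrite -(cardsID C A) addnC.
by apply: leq_trans (leq_card_setU _ _) _; rewrite leq_add2l.
Qed.

Lemma consecutive_constant n (f : 'I_n.+1 -> bool) :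
  (forall i j : 'I_n.+1, j = i.+1 :> nat -> f i = f j) ->
  forall i, f i = f ord0.
Proof.
move=> step i.
suff fk k : k < n.+1 -> f (inord k) = f ord0 by rewrite -(inord_val i) fk.
elim: k => [_ | k IHk ltkn].
  by congr f; apply: val_inj; rewrite /= inordK.
by rewrite -IHk ?(ltnW ltkn) //; apply/esym/step; rewrite !inordK // ltnW.
Qed.

Section P5.

Variables (T : finType) (e : rel T).

Lemma nbhdP (A : {set T}) v :
  reflect (exists2 u, u \in A & e v u) (v \in nbhd e A).
Proof.
rewrite inE; apply: (iffP existsP) => [[u /andP[]] | [u Au evu]].
  by exists u.
by exists u; apply/andP.
Qed.

Lemma has_P5_in_sub (S S' : {set T}) :
  S \subset S' -> has_P5_in e S -> has_P5_in e S'.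
Proof.
move=> /subsetP sSS' [v [vinj [vS vE]]].
by exists v; split=> //; split=> // i; exact/sSS'/vS.
Qed.

Lemma has_P5_in_split (S D : {set T}) :
  symmetric e -> {in S &, forall y z, y \in D -> e y z -> z \in D} ->
  has_P5_in e S -> has_P5_in e (S :&: D) \/ has_P5_in e (S :\: D).
Proof.
move=> esym closedD [v [vinj [vS vE]]].
have inD i : (v i \in D) = (v ord0 \in D).
  apply: (consecutive_constant (f := fun i => v i \in D)) => {}i j ij.
  apply/idP/idP => [viD | vjD].
    by apply: (closedD (v i) (v j) (vS i) (vS j) viD); exact: vE.
  by apply: (closedD (v j) (v i) (vS j) (vS i) vjD); rewrite esym vE.
by case: (boolP (v ord0 \in D)) => v0D; [left | right];
  exists v; split=> //; split=> // i; rewrite !inE vS inD v0D.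
Qed.

Lemma component_sub (S C : {set T}) : is_component e S C -> C \subset S.
Proof. by move=> [x _ ->]; apply/subsetP => y; rewrite inE => /andP[]. Qed.

Lemma component_edge_closed (S C : {set T}) :
  is_component e S C -> {in C & S, forall y z, e y z -> z \in C}.
Proof.
move=> [x _ ->] y z; rewrite !inE => /andP[yS xy] zS eyz.
by rewrite zS (connect_trans xy) // connect1 // /induced_rel yS zS.
Qed.

End P5.

Theorem lemma12 (T : finType) (e : rel T) (V1 V2 C F : {set T}) :
  simple_graph e ->
  V1 :&: V2 = set0 -> V1 :|: V2 = [set: T] ->
  P5_free_in e V1 -> P5_free_in e V2 ->
  is_component e V2 C ->
  F \subset V2 ->
  P5_free_in e (~: F) ->
  #|C :&: nbhd e V1| <= #|F :&: C| ->
  let X := C :&: nbhd e V1 in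
  let F' := (F :\: C) :|: X in
  P5_free_in e (~: F') /\ #|F'| <= #|F|.
Proof.
move=> [esym _] _ V12T _ P5freeV2 compC _ P5freeF leXFC X F'.
split; last exact: card_setDU_le.
have closedC : {in ~: F' &, forall y z, y \in C -> e y z -> z \in C}.
  move=> y z yF' _ yC eyz; apply: (component_edge_closed compC yC) => //.
  have : z \in V1 :|: V2 by rewrite V12T inE.
  rewrite inE => /orP[zV1 | //].
  have yX : y \in X by rewrite /X inE yC; apply/nbhdP; exists z.
  by move: yF'; rewrite /F' in_setC in_setU yX orbT.
move=> P5; case: (has_P5_in_split esym closedC P5) => [P5C | P5notC].
  apply/P5freeV2/(has_P5_in_sub _ P5C).
  by rewrite subIset // (component_sub compC) orbT.
apply/P5freeF/(has_P5_in_sub _ P5notC); apply/subsetP => x.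
rewrite /F' !inE => /andP[xC].
by rewrite xC /= negb_or => /andP[].
Qed.
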